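(* Assume $g$ satisfies (Hg), and let $k>0$, $(a,d)\in\mathcal H$. Then the following are equivalent: (i) $(a,d)\in\mathcal D^-(k)$; (ii) there exists $A\in(a,1)$ with $$\max_{v\in[0,A]}\big(d(k+1)v-dkA-g(v;a)\big)<0.$$
   Context: Let $\mathcal H=(0,1)\times(0,\infty)$. A function $g:\mathbb R\times[0,1]\to\mathbb R$, $(u,a)\mapsto g(u;a)$, satisfies (Hg) if it is $C^1$ and for every $a\in(0,1)$: $g(0;a)=g(a;a)=g(1;a)=0$, $g'(0;a)<0$, $g'(1;a)<0$, $g'(a;a)>0$ (where $g'=\partial_u g$), $g(v;a)>0$ for $v\in(-\infty,0)\cup(a,1)$ and $g(v;a)<0$ for $v\in(0,a)\cup(1,\infty)$. For $A\in(0,1)$ let $d^\diamond(A;a)=\inf\{d>0:\ d(k+1)(A-v)-g(A;a)\ge -g(v;a)\ \text{for all }v\in[0,A]\}$ and $$\mathcal D^-(k)=\Big\{(a,d)\in\mathcal H:\ d^\diamond(A;a)<d<\frac{g(A;a)}{A}\ \text{for some }A\in(a,1)\Big\}.$$ *)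

From Stdlib Require Import Reals Lra.
From Coquelicot Require Import Coquelicot.
Open Scope R_scope.

(* g(u;a) is written  g u a. *)

Definition cont_on_strip (f : R -> R -> R) : Prop :=
  forall u a, 0 <= a <= 1 ->
  forall eps, 0 < eps -> exists delta, 0 < delta /\
    forall u' a', 0 <= a' <= 1 -> Rabs (u' - u) < delta -> Rabs (a' - a) < delta ->
      Rabs (f u' a' - f u a) < eps.

(* g is C^1 on R x [0,1]: both partial derivatives exist (the one in a
   relative to [0,1], i.e. one-sided at the endpoints) and are jointly
   continuous on R x [0,1]. *)
Definition C1_strip (g : R -> R -> R) : Prop :=
  exists gu ga : R -> R -> R,
    cont_on_strip gu /\ cont_on_strip ga /\
    (forall u a, 0 <= a <= 1 -> is_derive (fun v => g v a) u (gu u a)) /\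
    (forall u a, 0 <= a <= 1 ->
       forall eps, 0 < eps -> exists delta, 0 < delta /\
         forall a', 0 <= a' <= 1 -> Rabs (a' - a) < delta ->
           Rabs (g u a' - g u a - ga u a * (a' - a)) <= eps * Rabs (a' - a)).

Definition gprime (g : R -> R -> R) (u a : R) : R := Derive (fun v => g v a) u.

Definition Hg (g : R -> R -> R) : Prop :=
  C1_strip g /\
  forall a, 0 < a < 1 ->
    g 0 a = 0 /\ g a a = 0 /\ g 1 a = 0 /\
    gprime g 0 a < 0 /\ gprime g 1 a < 0 /\ gprime g a a > 0 /\
    (forall v, (v < 0 \/ (a < v < 1)) -> g v a > 0) /\
    (forall v, ((0 < v < a) \/ 1 < v) -> g v a < 0).

Definition d_diamond (g : R -> R -> R) (k A a : R) : Rbar :=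
  Glb_Rbar (fun d => 0 < d /\
    forall v, 0 <= v <= A -> d * (k + 1) * (A - v) - g A a >= - g v a).

Definition in_Dminus (g : R -> R -> R) (k a d : R) : Prop :=
  (0 < a < 1 /\ 0 < d) /\
  exists A, a < A < 1 /\ Rbar_lt (d_diamond g k A a) (Finite d) /\ d < g A a / A.

(* max_{v in [0,A]} (d(k+1)v - dkA - g(v;a)), written as the supremum of the
   values (it is attained since the function is continuous on [0,A]). *)
Definition max_expr (g : R -> R -> R) (k a d A : R) : Rbar :=
  Lub_Rbar (fun y => exists v, 0 <= v <= A /\
    y = d * (k + 1) * v - d * k * A - g v a).

(** Both directions compare the chord of slope [d(k+1)] through [(A, g A)]
    with the graph of [g] on [[0, A]].  If some [d' < d] is feasible for
    [d^diamond(A)], then [d(k+1)v - dkA - g v <= dA - g A < 0] on [[0, A]].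
    Conversely, a negative maximum [-delta] lets us lower the slope to
    [d' (k+1) = d (k+1) - delta/2] while keeping [g v - d'(k+1) v] above the
    level [delta - dkA] on [[0, A]]; at [v = 1] this function lies below that
    level, and its first crossing [A'] of the level in [[A, 1)] is a point where
    [d'] is feasible and [g A' / A' > d]. *)

From Stdlib Require Import Reals Lra Classical.
From Coquelicot Require Import Coquelicot.
Open Scope R_scope.

Lemma continuous_near (f : R -> R) (x eps : R) :
  continuous f x -> 0 < eps ->
  exists del, 0 < del /\ forall y, Rabs (y - x) < del -> Rabs (f y - f x) < eps.
Proof.
  intros Hc Heps.
  destruct (proj1 (filterlim_locally f (f x)) Hc (mkposreal eps Heps)) as [del Hdel].
  exists del. split; [apply cond_pos |]. intros y Hy. exact (Hdel y Hy).
Qed.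

Lemma continuous_ge_left_limit (H : R -> R) (A s c : R) :
  continuous H s -> A < s -> (forall v, A <= v < s -> c <= H v) -> c <= H s.
Proof.
  intros Hc HAs Hbelow.
  destruct (Rle_lt_dec c (H s)) as [Hle | Hlt]; [exact Hle | exfalso].
  destruct (continuous_near H s (c - H s) Hc) as [del [Hdel Hnear]]; [lra |].
  set (v := Rmax A (s - del / 2)).
  assert (A <= v) by apply Rmax_l.
  assert (s - del / 2 <= v) by apply Rmax_r.
  assert (v < s) by (apply Rmax_lub_lt; lra).
  specialize (Hbelow v ltac:(lra)).
  specialize (Hnear v ltac:(apply Rabs_def1; lra)).
  apply Rabs_def2 in Hnear. lra.
Qed.

Lemma first_crossing (H : R -> R) (A B c : R) :
  (forall x, continuous H x) -> A < B -> c <= H A -> H B < c ->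
  exists x, A <= x < B /\ H x = c /\ forall v, A <= v <= x -> c <= H v.
Proof.
  intros Hc HAB HA HB.
  set (E := fun y => A <= y <= B /\ forall v, A <= v <= y -> c <= H v).
  assert (EA : E A).
  { split; [lra |]. intros v Hv. replace v with A by lra. exact HA. }
  destruct (completeness E) as [s [Hub Hleast]].
  { exists B. intros y [Hy _]. lra. }
  { exists A. exact EA. }
  assert (HAs : A <= s) by (apply Hub; exact EA).
  assert (Hbelow : forall v, A <= v < s -> c <= H v).
  { intros v Hv. destruct (Rle_lt_dec c (H v)) as [Hle | Hlt]; [exact Hle | exfalso].
    assert (s <= v); [| lra].
    apply Hleast. intros y [_ Hy].
    destruct (Rle_lt_dec y v) as [Hyv | Hvy]; [exact Hyv |].
    specialize (Hy v ltac:(lra)). lra. }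
  assert (Hs_ge : c <= H s).
  { destruct (Req_dec A s) as [<- | HAs']; [exact HA |].
    apply (continuous_ge_left_limit H A s c (Hc s)); [lra | exact Hbelow]. }
  assert (HsB : s < B).
  { assert (s <= B) by (apply Hleast; intros y [Hy _]; lra).
    destruct (Req_dec s B); [subst; lra | lra]. }
  assert (Hs_le : H s <= c).
  { destruct (Rle_lt_dec (H s) c) as [Hle | Hlt]; [exact Hle | exfalso].
    destruct (continuous_near H s (H s - c) (Hc s)) as [del [Hdel Hnear]]; [lra |].
    set (v := Rmin B (s + del / 2)).
    assert (v <= B) by apply Rmin_l.
    assert (v <= s + del / 2) by apply Rmin_r.
    assert (s < v) by (apply Rmin_glb_lt; lra).
    assert (v <= s); [| lra].
    apply Hub. split; [lra |]. intros w Hw.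
    destruct (Rlt_le_dec w s); [apply Hbelow; lra |].
    specialize (Hnear w ltac:(apply Rabs_def1; lra)).
    apply Rabs_def2 in Hnear. lra. }
  exists s. split; [lra |]. split; [lra |].
  intros v Hv. destruct (Rlt_le_dec v s); [apply Hbelow; lra |].
  replace v with s by lra. exact Hs_ge.
Qed.

Lemma Glb_Rbar_lt_ex (E : R -> Prop) (x : R) :
  Rbar_lt (Glb_Rbar E) x -> exists y, E y /\ y < x.
Proof.
  intros Hlt. apply NNPP. intros Hno.
  apply (Rbar_lt_not_le _ _ Hlt).
  apply (proj2 (Glb_Rbar_correct E)). intros y Hy. simpl.
  destruct (Rle_lt_dec x y) as [Hxy | Hyx]; [exact Hxy |].
  exfalso. apply Hno. exists y. split; assumption.
Qed.

Lemma Lub_Rbar_le_ub (E : R -> Prop) (M : R) :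
  (forall y, E y -> y <= M) -> Rbar_le (Lub_Rbar E) M.
Proof. intros Hub. exact (proj2 (Lub_Rbar_correct E) M Hub). Qed.

Lemma Lub_Rbar_lt_ex_ub (E : R -> Prop) (x y0 : R) :
  E y0 -> Rbar_lt (Lub_Rbar E) x -> exists m, m < x /\ forall y, E y -> y <= m.
Proof.
  intros Hy0. destruct (Lub_Rbar_correct E) as [Hub _]. revert Hub.
  destruct (Lub_Rbar E) as [m | |]; simpl; intros Hub Hlt.
  - exists m. split; [exact Hlt |]. intros y Hy. exact (Hub y Hy).
  - contradiction.
  - destruct (Hub y0 Hy0).
Qed.

Lemma Hg_continuous (g : R -> R -> R) (a : R) :
  Hg g -> 0 <= a <= 1 -> forall u, continuous (fun v => g v a) u.
Proof.
  intros [[gu [ga [_ [_ [Hder _]]]]] _] Ha u.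
  apply (@ex_derive_continuous R_AbsRing R_NormedModule).
  exists (gu u a). exact (Hder u a Ha).
Qed.

Section Dminus.

Variables (g : R -> R -> R) (k a : R).

Definition diamond_feasible (A d : R) : Prop :=
  forall v, 0 <= v <= A -> d * (k + 1) * (A - v) - g A a >= - g v a.

Lemma d_diamond_le (A d : R) :
  0 < d -> diamond_feasible A d -> Rbar_le (d_diamond g k A a) d.
Proof. intros Hd Hf. exact (proj1 (Glb_Rbar_correct _) d (conj Hd Hf)). Qed.

Lemma max_expr_le_of_feasible (d d' A : R) :
  -1 <= k -> d' <= d -> diamond_feasible A d' ->
  Rbar_le (max_expr g k a d A) (d * A - g A a).
Proof.
  intros Hk Hd'd Hf. apply Lub_Rbar_le_ub. intros y [v [Hv ->]].
  specialize (Hf v Hv).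
  assert (0 <= (d - d') * (k + 1) * (A - v))
    by (apply Rmult_le_pos; [apply Rmult_le_pos |]; lra).
  lra.
Qed.

Lemma max_expr_neg_margin (d A : R) :
  0 <= A -> Rbar_lt (max_expr g k a d A) 0 ->
  exists delta, 0 < delta /\
    forall v, 0 <= v <= A -> d * (k + 1) * v - d * k * A + delta <= g v a.
Proof.
  intros HA Hmax.
  destruct (Lub_Rbar_lt_ex_ub _ 0 (d * (k + 1) * 0 - d * k * A - g 0 a)
              (ex_intro _ 0 (conj (conj (Rle_refl 0) HA) eq_refl)) Hmax)
    as [m [Hm Hub]].
  exists (- m). split; [lra |]. intros v Hv.
  specialize (Hub _ (ex_intro _ v (conj Hv eq_refl))). lra.
Qed.

Lemma feasible_of_margin (d A delta : R) :
  (forall u, continuous (fun v => g v a) u) -> g 0 a = 0 -> g 1 a = 0 ->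
  0 < k -> 0 < d -> 0 <= A < 1 -> 0 < delta ->
  (forall v, 0 <= v <= A -> d * (k + 1) * v - d * k * A + delta <= g v a) ->
  exists A' d', A <= A' < 1 /\ 0 < d' < d /\ diamond_feasible A' d' /\
    d * A' < g A' a.
Proof.
  intros Hc g0 g1 Hk Hd HA Hdelta Hmargin.
  set (c := d * (k + 1) - delta / 2).
  set (H := fun v => g v a - c * v).
  set (mu := delta - d * k * A).
  assert (HcH : forall x, continuous H x).
  { intros x. apply (continuous_minus (fun v => g v a) (fun v => c * v)); [apply Hc |].
    apply (continuous_mult (fun _ => c) (fun v => v));
      [apply continuous_const | apply continuous_id]. }
  assert (HdkA : 0 <= d * k * A) by (apply Rmult_le_pos; [apply Rmult_le_pos |]; lra).
  assert (Hdk : d * k * A < d * k)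
    by (rewrite <- (Rmult_1_r (d * k)) at 2; apply Rmult_lt_compat_l; [nra | lra]).
  assert (Hdelta_le : delta <= d * k * A)
    by (specialize (Hmargin 0 ltac:(lra)); rewrite g0 in Hmargin; lra).
  assert (Hlevel : forall v, 0 <= v <= A -> mu <= H v).
  { intros v Hv. specialize (Hmargin v Hv).
    assert (0 <= delta / 2 * v) by (apply Rmult_le_pos; lra).
    unfold H, mu, c. lra. }
  assert (H1 : H 1 < mu) by (unfold H, mu, c; rewrite g1; lra).
  destruct (first_crossing H A 1 mu HcH ltac:(lra) (Hlevel A ltac:(lra)) H1)
    as [A' [HA' [HA'mu Habove]]].
  assert (Hmin : forall v, 0 <= v <= A' -> H A' <= H v).
  { intros v Hv. rewrite HA'mu.
    destruct (Rle_lt_dec v A); [apply Hlevel | apply Habove]; lra. }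
  assert (Hc_pos : 0 < c) by (unfold c; nra).
  exists A', (c / (k + 1)). split; [exact HA' |]. split; [split |]; [| | split].
  - apply Rdiv_lt_0_compat; lra.
  - apply Rlt_div_l; unfold c; lra.
  - intros v Hv. specialize (Hmin v Hv). unfold H in Hmin.
    replace (c / (k + 1) * (k + 1)) with c by (field; lra). lra.
  - assert (d * k * A <= d * k * A') by (apply Rmult_le_compat_l; nra).
    assert (delta * A' < delta * 1) by (apply Rmult_lt_compat_l; lra).
    unfold H, mu, c in HA'mu. lra.
Qed.

End Dminus.

Theorem proposition5p2 (g : R -> R -> R) (k a d : R) :
  Hg g -> 0 < k -> (0 < a < 1 /\ 0 < d) ->
  (in_Dminus g k a d <->
   exists A, a < A < 1 /\ Rbar_lt (max_expr g k a d A) (Finite 0)).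
Proof.
  intros HHg Hk [Ha Hd].
  destruct (proj2 HHg a Ha) as [g0 [_ [g1 _]]].
  split.
  - intros [_ [A [HA [Hdiamond Hslope]]]].
    destruct (Glb_Rbar_lt_ex _ _ Hdiamond) as [d' [[_ Hfeas] Hd'd]].
    apply (Rlt_div_r d (g A a) A) in Hslope; [| lra].
    exists A. split; [exact HA |].
    apply Rbar_le_lt_trans with (d * A - g A a).
    + apply (max_expr_le_of_feasible g k a d d' A); [lra | lra | exact Hfeas].
    + simpl. lra.
  - intros [A [HA Hmax]].
    destruct (max_expr_neg_margin g k a d A) as [delta [Hdelta Hmargin]];
      [lra | exact Hmax |].
    destruct (feasible_of_margin g k a d A delta) as [A' [d' [HA' [Hd' [Hfeas Hslope]]]]];
      try assumption; [apply Hg_continuous; [exact HHg | lra] | lra |].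
    split; [split; assumption |]. exists A'. split; [lra |]. split.
    + apply Rbar_le_lt_trans with d'; [apply d_diamond_le; [lra | exact Hfeas] | simpl; lra].
    + apply Rlt_div_r; lra.
Qed.
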